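(* Let $G_i=(V_i,E_i)$ be a simple graph of maximum degree $\Delta_i$, $i\in\{1,2\}$, and let $S\subseteq V_1\times V_2$. Then: (i) If, for some $i\in\{1,2\}$ and integer $k_i$, $P_{V_i}(S)$ is a $k_i$-daf set in $G_i$, then $S$ is a $(k_i+\Delta_j)$-daf set in $G_1\times G_2$, where $j\in\{1,2\}$, $j\neq i$. (ii) If, for integers $k_1,k_2$, $P_{V_1}(S)$ is a $k_1$-daf set in $G_1$ and $P_{V_2}(S)$ is a $k_2$-daf set in $G_2$, then $S$ is a $(k_1+k_2-1)$-daf set in $G_1\times G_2$.
   Context: All graphs are finite and simple. For a graph $G=(V,E)$, a set $S\subseteq V$ and $v\in V$, let $\delta_S(v)=|\{u\in S: uv\in E\}|$, $\delta(v)$ the degree of $v$, and $\overline{S}=V\setminus S$. For an integer $k$, a non-empty set $S\subseteq V$ is a defensive $k$-alliance if $\delta_S(v)\ge \delta_{\overline S}(v)+k$ for every $v\in S$. A set $X\subseteq V$ is a defensive $k$-alliance free set ($k$-daf set) if no defensive $k$-alliance $S$ satisfies $S\subseteq X$. The Cartesian product $G_1\times G_2$ of $G_1=(V_1,E_1)$, $G_2=(V_2,E_2)$ has vertex set $V_1\times V_2$, with $(a,b)$ adjacent to $(c,d)$ iff either $a=c$ and $bd\in E_2$, or $b=d$ and $ac\in E_1$. For $A\subseteq V_1\times V_2$, $P_{V_i}(A)$ denotes the projection of $A$ onto $V_i$. *)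

From mathcomp Require Import all_boot all_order all_algebra.
Set Implicit Arguments. Unset Strict Implicit. Unset Printing Implicit Defensive.
Import Order.TTheory GRing.Theory Num.Theory.

Definition simple_graph (T : finType) (e : rel T) : Prop :=
  symmetric e /\ irreflexive e.

Definition deg_in (T : finType) (e : rel T) (S : {set T}) (v : T) : nat :=
  #|[set u in S | e v u]|.

Definition deg (T : finType) (e : rel T) (v : T) : nat := deg_in e [set: T] v.

Definition maxdeg (T : finType) (e : rel T) : nat := \max_(v : T) deg e v.

Definition def_alliance (T : finType) (e : rel T) (k : int) (S : {set T}) : Prop :=
  S != set0 /\
  forall v, v \in S -> ((deg_in e S v)%:Z >= (deg_in e (~: S) v)%:Z + k)%R.

Definition daf (T : finType) (e : rel T) (k : int) (X : {set T}) : Prop :=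
  forall S : {set T}, S \subset X -> ~ def_alliance e k S.

Definition cart_prod (T1 T2 : finType) (e1 : rel T1) (e2 : rel T2) : rel (T1 * T2) :=
  fun x y => ((x.1 == y.1) && e2 x.2 y.2) || ((x.2 == y.2) && e1 x.1 y.1).

Definition proj1 (T1 T2 : finType) (S : {set T1 * T2}) : {set T1} := [set x.1 | x in S].
Definition proj2 (T1 T2 : finType) (S : {set T1 * T2}) : {set T2} := [set x.2 | x in S].

From mathcomp Require Import all_boot all_order all_algebra zify.
Import Order.TTheory GRing.Theory Num.Theory.

Set Implicit Arguments.
Unset Strict Implicit.

(* Call a vertex v of Z a *violator* of Z (for e and k) when it
   breaks the defensive k-alliance inequality inside Z.  A set X is k-daf iff
   every nonempty Z contained in X has a violator.  Violation is inherited by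
   subsets containing v, and every vertex violates the whole vertex set with
   k = maxdeg + 1.
   In G1 x G2 the A-degree of (x, y) splits as the degree of x in the row
   slice {a | (a, y) in A} plus the degree of y in the column slice
   {b | (x, b) in A}.  Hence if x violates its row slice for k1 and y its
   column slice for k2, then (x, y) violates A for k1 + k2 - 1.
   All three claims follow by producing such a vertex in every nonempty
   A contained in S: take a violator x of P_V1(A) (its row slice lies in
   P_V1(A)) and then, for (ii), a violator y of the column slice of x; for
   (i) the other factor is handled by the whole vertex set with
   k = maxdeg + 1. *)

Definition violates (T : finType) (e : rel T) (k : int) (Z : {set T}) (v : T) : bool :=
  ((deg_in e Z v)%:Z < (deg_in e (~: Z) v)%:Z + k)%R.

Lemma deg_in_subset (T : finType) (e : rel T) (R Z : {set T}) (v : T) :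
  R \subset Z -> deg_in e R v <= deg_in e Z v.
Proof.
move=> sRZ; apply: subset_leq_card; apply/subsetP => u; rewrite !inE.
by case/andP=> /(subsetP sRZ) -> ->.
Qed.

(* Violation passes to subsets: shrinking Z lowers delta_Z(v) and raises
   the outside degree. *)
Lemma violates_subset (T : finType) (e : rel T) (k : int) (R Z : {set T}) (v : T) :
  R \subset Z -> violates e k Z v -> violates e k R v.
Proof.
move=> sRZ; rewrite /violates.
have inR := deg_in_subset e v sRZ.
have outR := deg_in_subset e v (introT idP (etrans (setCS Z R) sRZ)).
lia.
Qed.

Lemma violates_setT (T : finType) (e : rel T) (v : T) :
  violates e ((maxdeg e)%:Z + 1) [set: T] v.
Proof. have := @leq_bigmax T (deg e) v; rewrite /violates /maxdeg /deg; lia. Qed.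

Lemma violator_not_alliance (T : finType) (e : rel T) (k : int) (S : {set T}) (v : T) :
  v \in S -> violates e k S v -> ~ def_alliance e k S.
Proof.
move=> Sv viol [_ /(_ v Sv)].
by rewrite leNgt; move: viol; rewrite /violates => ->.
Qed.

Lemma daf_violator (T : finType) (e : rel T) (k : int) (X Z : {set T}) :
  daf e k X -> Z \subset X -> Z != set0 -> exists2 z, z \in Z & violates e k Z z.
Proof.
move=> dafX sZX nZ.
have [z /andP[Zz viol] | none] := pickP [pred z in Z | violates e k Z z].
  by exists z.
case: (dafX Z sZX); split=> // v Zv; rewrite leNgt.
by have := none v; rewrite /= Zv /= /violates => ->.
Qed.

Lemma image_violator (T T' : finType) (f : T -> T') (e : rel T') (k : int)
    (S A : {set T}) :
  daf e k (f @: S) -> A \subset S -> A != set0 ->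
  exists2 u, u \in A & violates e k (f @: A) (f u).
Proof.
move=> dafS sAS /set0Pn[u0 Au0].
have nfA : f @: A != set0 by apply/set0Pn; exists (f u0); apply: imset_f.
have [_ /imsetP[u Au ->] viol] := daf_violator dafS (imsetS f sAS) nfA.
by exists u.
Qed.

Section CartesianProduct.

Variables (T1 T2 : finType) (e1 : rel T1) (e2 : rel T2).
Hypothesis irr1 : irreflexive e1.

Local Notation cart := (cart_prod e1 e2).

Definition row (A : {set T1 * T2}) (y : T2) : {set T1} := [set a | (a, y) \in A].
Definition col (A : {set T1 * T2}) (x : T1) : {set T2} := [set b | (x, b) \in A].

Lemma row_setC A y : row (~: A) y = ~: row A y.
Proof. by apply/setP => a; rewrite !inE. Qed.

Lemma col_setC A x : col (~: A) x = ~: col A x.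
Proof. by apply/setP => b; rewrite !inE. Qed.

Lemma row_sub_proj1 A y : row A y \subset proj1 A.
Proof. by apply/subsetP => a; rewrite inE => Aay; apply/imsetP; exists (a, y). Qed.

Lemma col_sub_proj2 A x : col A x \subset proj2 A.
Proof. by apply/subsetP => b; rewrite inE => Axb; apply/imsetP; exists (x, b). Qed.

(* Neighbours of (x, y) split into those in the column of x and those in the row of y. *)
Lemma deg_in_cart A x y :
  deg_in cart A (x, y) = deg_in e1 (row A y) x + deg_in e2 (col A x) y.
Proof.
rewrite /deg_in -(cardsID [set u | u.1 == x]) addnC.
have -> : [set u in A | cart (x, y) u] :&: [set u | u.1 == x] =
          setX [set x] [set b in col A x | e2 y b].
  apply/setP => -[a b]; rewrite !inE /cart_prod /=.
  by case: (eqVneq a x) => [->|]; rewrite ?irr1 ?andbF ?orbF ?andbT.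
have -> : [set u in A | cart (x, y) u] :\: [set u | u.1 == x] =
          setX [set a in row A y | e1 x a] [set y].
  apply/setP => -[a b]; rewrite !inE /cart_prod /=.
  case: (eqVneq a x) => [->|neq]; first by rewrite irr1 !andbF.
  by case: (eqVneq b y) => [->|_]; rewrite /= ?andbT ?andbF.
by rewrite !cardsX !cards1 mul1n muln1.
Qed.

Lemma violates_cart (k1 k2 : int) A x y :
  violates e1 k1 (row A y) x -> violates e2 k2 (col A x) y ->
  violates cart (k1 + k2 - 1) A (x, y).
Proof. by rewrite /violates !deg_in_cart row_setC col_setC; lia. Qed.

Lemma daf_cart_of_slices (k1 k2 : int) (S : {set T1 * T2}) :
  (forall A : {set T1 * T2}, A \subset S -> A != set0 -> exists x y,
     [/\ (x, y) \in A, violates e1 k1 (row A y) x & violates e2 k2 (col A x) y]) ->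
  daf cart (k1 + k2 - 1) S.
Proof.
move=> slices A sAS alliance; have [nA _] := alliance.
have [x [y [Axy vrow vcol]]] := slices A sAS nA.
exact: violator_not_alliance Axy (violates_cart vrow vcol) alliance.
Qed.

(* Part (i) with i = 1: the column slice is handled by the whole of V2,
   which every vertex violates for k = maxdeg e2 + 1. *)
Lemma daf_cart_proj1 (k1 : int) (S : {set T1 * T2}) :
  daf e1 k1 (proj1 S) -> daf cart (k1 + (maxdeg e2)%:Z) S.
Proof.
move=> dafS; have -> : (k1 + (maxdeg e2)%:Z = k1 + ((maxdeg e2)%:Z + 1) - 1)%R by lia.
apply: daf_cart_of_slices => A sAS nA.
have [[x y] Axy viol] := image_violator dafS sAS nA.
exists x, y; split=> //; first exact: violates_subset (row_sub_proj1 A y) viol.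
exact: violates_subset (subsetT _) (violates_setT e2 y).
Qed.

(* Part (i) with i = 2, symmetrically, with k = maxdeg e1 + 1 on the row slice. *)
Lemma daf_cart_proj2 (k2 : int) (S : {set T1 * T2}) :
  daf e2 k2 (proj2 S) -> daf cart (k2 + (maxdeg e1)%:Z) S.
Proof.
move=> dafS; have -> : (k2 + (maxdeg e1)%:Z = ((maxdeg e1)%:Z + 1) + k2 - 1)%R by lia.
apply: daf_cart_of_slices => A sAS nA.
have [[x y] Axy viol] := image_violator dafS sAS nA.
exists x, y; split=> //; last exact: violates_subset (col_sub_proj2 A x) viol.
exact: violates_subset (subsetT _) (violates_setT e1 x).
Qed.

(* Part (ii): pick x violating P_V1(A), then y violating the column slice of x. *)
Lemma daf_cart_proj12 (k1 k2 : int) (S : {set T1 * T2}) :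
  daf e1 k1 (proj1 S) -> daf e2 k2 (proj2 S) -> daf cart (k1 + k2 - 1) S.
Proof.
move=> daf1 daf2; apply: daf_cart_of_slices => A sAS nA.
have [[x y0] Axy0 vx] := image_violator daf1 sAS nA.
have ncol : col A x != set0 by apply/set0Pn; exists y0; rewrite inE.
have sColS : col A x \subset proj2 S := subset_trans (col_sub_proj2 A x) (imsetS _ sAS).
have [y Axy vy] := daf_violator daf2 sColS ncol.
exists x, y; split=> //; first by rewrite inE in Axy.
exact: violates_subset (row_sub_proj1 A y) vx.
Qed.

End CartesianProduct.

Unset Implicit Arguments.

Theorem theorem1 (T1 T2 : finType) (e1 : rel T1) (e2 : rel T2)
  (g1 : simple_graph e1) (g2 : simple_graph e2) (S : {set T1 * T2}) :
  (* (i), i = 1, j = 2 *)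
  (forall k1 : int, daf e1 k1 (proj1 S) ->
     daf (cart_prod e1 e2) (k1 + (maxdeg e2)%:Z)%R S) /\
  (* (i), i = 2, j = 1 *)
  (forall k2 : int, daf e2 k2 (proj2 S) ->
     daf (cart_prod e1 e2) (k2 + (maxdeg e1)%:Z)%R S) /\
  (* (ii) *)
  (forall k1 k2 : int, daf e1 k1 (proj1 S) -> daf e2 k2 (proj2 S) ->
     daf (cart_prod e1 e2) (k1 + k2 - 1)%R S).
Proof.
have irr1 : irreflexive e1 := g1.2.
split; [|split].
- by move=> k1; apply: daf_cart_proj1.
- by move=> k2; apply: daf_cart_proj2.
- by move=> k1 k2; apply: daf_cart_proj12.
Qed.
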